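(* Let $G$ be the graph consisting of countably many paths $P_1,P_2,\dots$ which pairwise have exactly one vertex $u$ in common, $u$ being the first vertex of each $P_i$, where $P_i$ has $2i$ edges; weight the edges of each $P_i$ alternately $0$ and $1$, starting with weight $0$ on the edge of $P_i$ at $u$. Then $G$ has an almost perfect matching, but $G$ has no matching that is a strongly $w$-minimal perfect or almost perfect matching.
   Context: A matching is perfect if every vertex is covered by it, and almost perfect if exactly one vertex is not covered. For a set $F$ of edges, $w[F]:=\sum_{e\in F}w(e)$. A perfect or almost perfect matching $M$ is strongly $w$-minimal (among perfect and almost perfect matchings) if there is no perfect or almost perfect matching $N$ with $|M\setminus N|,|N\setminus M|<\infty$ and $w[N\setminus M]<w[M\setminus N]$. *)

(* Vertices: None = u; Some (i,k) = the vertex at distance k+1 from u on the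
   path P_(i+1) (valid iff k < 2*(i+1)).
   Edges: (i,k) = the (k+1)-th edge of P_(i+1) (valid iff k < 2*(i+1)),
   joining the vertices at distance k and k+1 from u on P_(i+1). *)
From Stdlib Require Import Arith List.
Import ListNotations.

Definition V := option (nat * nat).
Definition E := (nat * nat)%type.

Definition isV (v : V) : Prop :=
  match v with None => True | Some (i, k) => k < 2 * (i + 1) end.
Definition isE (e : E) : Prop := snd e < 2 * (fst e + 1).

Definition src (e : E) : V :=
  match e with (i, 0) => None | (i, S k) => Some (i, k) end.
Definition tgt (e : E) : V := Some e.
Definition incident (e : E) (v : V) : Prop := v = src e \/ v = tgt e.

Definition w (e : E) : nat := if Nat.odd (snd e) then 1 else 0.

Definition matching (M : E -> Prop) : Prop :=
  (forall e, M e -> isE e) /\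
  (forall e f v, M e -> M f -> incident e v -> incident f v -> e = f).
Definition covered (M : E -> Prop) (v : V) : Prop :=
  exists e, M e /\ incident e v.
Definition perfect (M : E -> Prop) : Prop :=
  matching M /\ forall v, isV v -> covered M v.
Definition almost_perfect (M : E -> Prop) : Prop :=
  matching M /\ exists v0, isV v0 /\ ~ covered M v0 /\
    forall v, isV v -> v <> v0 -> covered M v.
Definition perf_or_almost (M : E -> Prop) : Prop :=
  perfect M \/ almost_perfect M.

Definition setD (A B : E -> Prop) : E -> Prop := fun e => A e /\ ~ B e.
Definition finite_set (F : E -> Prop) : Prop :=
  exists l : list E, forall e, F e -> In e l.
Definition wsum (F : E -> Prop) (s : nat) : Prop :=
  exists l : list E, NoDup l /\ (forall e, In e l <-> F e) /\
    s = fold_right (fun e acc => w e + acc) 0 l.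

Definition strongly_w_minimal (M : E -> Prop) : Prop :=
  perf_or_almost M /\
  ~ (exists N, perf_or_almost N /\
       finite_set (setD M N) /\ finite_set (setD N M) /\
       exists a b, wsum (setD N M) a /\ wsum (setD M N) b /\ a < b).

(* Every perfect or almost perfect matching is one of the matchings [alt i t]: all paths
   use their odd (weight 1) edges, except path [i], which uses its even edges before the
   vertex at distance [2 t] from [u] and its odd edges after it; that vertex is the one
   left uncovered.  Weight strictly drops under a finite change in each case: if the hole
   is not at the end of its path, move it two steps further (trade a weight-1 edge for a
   weight-0 one); if it is at the end of path [i], switch path [i] to odd edges and path
   [i+1] to even edges, which trades [i+2] weight-1 edges for [i+1] of them. *)
From Stdlib Require Import Arith List Lia ZifyNat Classical.
Import ListNotations.

Lemma odd_mod2 k : Nat.odd k = (k mod 2 =? 1).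
Proof.
  destruct (Nat.Even_or_Odd k) as [[t ->]|[t ->]].
  - rewrite <- (Nat.add_0_l (2 * t)), Nat.odd_add_mul_2.
    symmetry; apply Nat.eqb_neq; lia.
  - rewrite Nat.add_comm, Nat.odd_add_mul_2.
    symmetry; apply Nat.eqb_eq; lia.
Qed.

Lemma edge_eq (a k j m : nat) : ((a, k) : E) = (j, m) <-> a = j /\ k = m.
Proof. apply pair_equal_spec. Qed.

(* Closes goals that are propositional combinations of linear arithmetic facts,
   parities and boolean comparisons of naturals. *)
Ltac decide_parity :=
  rewrite ?edge_eq, ?odd_mod2 in *;
  repeat match goal with
  | |- context [?a =? ?b] => destruct (Nat.eqb_spec a b)
  | H : context [?a =? ?b] |- _ => destruct (Nat.eqb_spec a b)
  | |- context [?a <=? ?b] => destruct (Nat.leb_spec a b)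
  | H : context [?a <=? ?b] |- _ => destruct (Nat.leb_spec a b)
  end;
  subst; cbn [fst snd] in *;
  intuition (first [reflexivity | discriminate | lia | exfalso; lia]).

Lemma incident_root e : incident e None <-> snd e = 0.
Proof.
  destruct e as [j [|k]]; unfold incident, src, tgt; cbn; intuition discriminate.
Qed.

Lemma incident_path e j k : incident e (Some (j, k)) <-> e = (j, k) \/ e = (j, S k).
Proof.
  destruct e as [a [|b]]; unfold incident, src, tgt;
    split; intros [H|H]; try discriminate; injection H as -> ->; auto.
Qed.

Lemma covered_root M : covered M None <-> exists j, M (j, 0).
Proof.
  split.
  - intros [[j k] [Me Hinc]]; apply incident_root in Hinc; cbn in Hinc; subst; eauto.
  - intros [j Me]; exists (j, 0); split; [exact Me | now apply incident_root].
Qed.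

Lemma covered_path M j k : covered M (Some (j, k)) <-> M (j, k) \/ M (j, S k).
Proof.
  split.
  - intros [e [Me Hinc]]; apply incident_path in Hinc as [-> | ->]; auto.
  - intros [Me|Me]; eexists; (split; [exact Me | apply incident_path; auto]).
Qed.

Lemma matching_intro M :
  (forall e, M e -> isE e) ->
  (forall j k, M (j, k) -> M (j, S k) -> False) ->
  (forall j j', M (j, 0) -> M (j', 0) -> j = j') ->
  matching M.
Proof.
  intros HE Hpath Hroot; split; [exact HE|].
  intros e f [[j k]|] Me Mf He Hf.
  - apply incident_path in He, Hf.
    destruct He as [-> | ->], Hf as [-> | ->]; try reflexivity; exfalso; eauto.
  - apply incident_root in He, Hf.
    destruct e as [j k], f as [j' k']; cbn in *; subst; f_equal; auto.
Qed.

Lemma matching_root M j j' : matching M -> M (j, 0) -> M (j', 0) -> j = j'.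
Proof.
  intros [_ Hm] Me Me'.
  assert (H : (j, 0) = (j', 0)) by (apply (Hm _ _ None); auto; now apply incident_root).
  now injection H.
Qed.

Lemma covered_alternates M j k :
  matching M -> covered M (Some (j, k)) -> (M (j, S k) <-> ~ M (j, k)).
Proof.
  intros [_ Hm] Hcov; apply covered_path in Hcov.
  split; [|tauto].
  intros Me' Me.
  assert (H : (j, k) = (j, S k)) by (apply (Hm _ _ (Some (j, k))); auto; apply incident_path; auto).
  injection H; lia.
Qed.

Lemma matching_alternates M j a c b :
  matching M -> (M (j, a) <-> Nat.odd a = c) ->
  (forall k, a <= k < b -> covered M (Some (j, k))) ->
  forall k, a <= k <= b -> (M (j, k) <-> Nat.odd k = c).
Proof.
  intros Hm Ha Hcov k Hk; induction k as [|k IH].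
  - now replace a with 0 in Ha by lia.
  - destruct (Nat.eq_dec a (S k)) as [<-|Hne]; [exact Ha|].
    rewrite (covered_alternates M j k Hm (Hcov k ltac:(lia))), IH by lia.
    rewrite Nat.odd_succ, <- Nat.negb_odd.
    destruct (Nat.odd k), c; cbn; intuition discriminate.
Qed.

Definition alt (i t : nat) (e : E) : Prop :=
  isE e /\ Nat.odd (snd e) = (2 * (if fst e =? i then t else 0) <=? snd e).

Lemma alt_matching i t : matching (alt i t).
Proof.
  apply matching_intro; unfold alt, isE; cbn; [tauto | |]; intros; decide_parity.
Qed.

Lemma alt_almost_perfect i t : t <= i + 1 -> almost_perfect (alt i t).
Proof.
  intros Ht; split; [apply alt_matching|].
  destruct t as [|t].
  - exists None; split; [exact I|split].
    + rewrite covered_root; intros [j Hj]; unfold alt, isE in Hj; decide_parity.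
    + intros [[a k]|] Hv Hne; [|congruence].
      apply covered_path; unfold alt, isE, isV in *; cbn; decide_parity.
  - exists (Some (i, 2 * t + 1)); split; [cbn; lia|split].
    + rewrite covered_path; unfold alt, isE; cbn; decide_parity.
    + intros [[a k]|] Hv Hne.
      * assert (Hhole : ~ (a = i /\ k = 2 * t + 1)) by (intros [-> ->]; auto).
        apply covered_path; unfold alt, isE, isV in *; cbn; decide_parity.
      * apply covered_root; exists i; unfold alt, isE; cbn; decide_parity.
Qed.

Lemma alt_of_path_parities M i t :
  (forall e, M e -> isE e) ->
  (forall j k, k < 2 * (j + 1) ->
     (M (j, k) <-> Nat.odd k = (2 * (if j =? i then t else 0) <=? k))) ->
  forall e, M e <-> alt i t e.
Proof.
  intros HE Hpath [j k]; unfold alt; split.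
  - intros Me; pose proof (HE _ Me) as HEe; split; [exact HEe|]; now apply Hpath.
  - intros [HEe Hk]; now apply Hpath.
Qed.

Section Classification.

Variables (M : E -> Prop) (v0 : V).
Hypothesis Hmatch : matching M.
Hypothesis Hcov : forall v, isV v -> v <> v0 -> covered M v.

Lemma alt_of_root_uncovered : ~ covered M None -> forall e, M e <-> alt 0 0 e.
Proof.
  intros Hroot.
  assert (Hv0 : v0 = None) by (apply NNPP; intros Hne; apply Hroot, Hcov; auto; exact I).
  subst v0.
  apply alt_of_path_parities; [apply Hmatch|]; intros j k Hk.
  replace (2 * (if j =? 0 then 0 else 0) <=? k) with true by (now destruct (j =? 0)).
  apply (matching_alternates M j 0 true (2 * j + 1)); [exact Hmatch | | | lia].
  - split; [intros Me; exfalso; apply Hroot, covered_root; eauto | discriminate].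
  - intros k' Hk'; apply Hcov; [cbn; lia | discriminate].
Qed.

(* Fully covered, path [i] would have to be matched by its even edges, and its last
   vertex would stay uncovered. *)
Lemma root_path_has_hole i :
  M (i, 0) -> exists m, m < 2 * (i + 1) /\ ~ covered M (Some (i, m)).
Proof.
  intros Hi; apply NNPP; intros Hno.
  assert (Hall : forall k, k < 2 * (i + 1) -> covered M (Some (i, k)))
    by (intros k Hk; apply NNPP; eauto).
  assert (Heven := matching_alternates M i 0 false (2 * i + 1) Hmatch
            ltac:(split; auto) ltac:(intros k Hk; apply Hall; lia)).
  destruct (proj1 (covered_path M i (2 * i + 1)) (Hall (2 * i + 1) ltac:(lia))) as [Me|Me].
  - apply Heven in Me; decide_parity.
  - apply (proj1 Hmatch) in Me; unfold isE in Me; cbn [fst snd] in Me; lia.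
Qed.

Lemma alt_of_root_covered i :
  M (i, 0) -> exists t, t <= i + 1 /\ forall e, M e <-> alt i t e.
Proof.
  intros Hi.
  assert (Hother : forall j, j <> i -> ~ M (j, 0))
    by (intros j Hj Me; exact (Hj (matching_root M j i Hmatch Me Hi))).
  destruct (root_path_has_hole i Hi) as [m [Hm_bound Hm_unc]].
  assert (Hv0 : v0 = Some (i, m))
    by (apply NNPP; intros Hne; apply Hm_unc, Hcov; [cbn; lia | congruence]).
  subst v0.
  rewrite covered_path in Hm_unc.
  assert (Hbefore : forall k, k <= m -> (M (i, k) <-> Nat.odd k = false)).
  { intros k Hk; apply (matching_alternates M i 0 false m); [exact Hmatch | | | lia].
    - split; auto.
    - intros k' Hk'; apply Hcov; [cbn; lia | injection 1; lia]. }
  assert (Hm_odd : Nat.odd m = true)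
    by (destruct (Nat.odd m) eqn:Ho; [reflexivity | exfalso; apply Hm_unc; left; now apply Hbefore]).
  assert (Hafter : forall k, S m <= k <= 2 * i + 1 -> (M (i, k) <-> Nat.odd k = true)).
  { intros k Hk; apply (matching_alternates M i (S m) true (2 * i + 1)); [exact Hmatch | | | lia].
    - rewrite Nat.odd_succ, <- Nat.negb_odd, Hm_odd; cbn; intuition discriminate.
    - intros k' Hk'; apply Hcov; [cbn; lia | injection 1; lia]. }
  exists ((m + 1) / 2); split; [lia|].
  apply alt_of_path_parities; [apply Hmatch|]; intros j k Hk.
  destruct (Nat.eq_dec j i) as [->|Hj].
  - destruct (Nat.le_gt_cases k m);
      [rewrite Hbefore by lia | rewrite Hafter by lia]; decide_parity.
  - replace (j =? i) with false by (symmetry; now apply Nat.eqb_neq).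
    apply (matching_alternates M j 0 true (2 * j + 1)); [exact Hmatch | | | lia].
    + split; [intros Me; destruct (Hother j Hj Me) | discriminate].
    + intros k' Hk'; apply Hcov; [cbn; lia | congruence].
Qed.

End Classification.

Lemma perf_or_almost_alt M :
  perf_or_almost M -> exists i t, t <= i + 1 /\ forall e, M e <-> alt i t e.
Proof.
  intros HM.
  assert (Hcov : exists v0, matching M /\ forall v, isV v -> v <> v0 -> covered M v)
    by (destruct HM as [[Hm Hc] | [Hm [v0 [_ [_ Hc]]]]]; [exists None | exists v0]; auto).
  destruct Hcov as [v0 [Hm Hc]].
  destruct (classic (covered M None)) as [Hroot|Hroot].
  - apply covered_root in Hroot as [i Hi].
    destruct (alt_of_root_covered M v0 Hm Hc i Hi) as [t Ht]; eauto.
  - exists 0, 0; split; [lia|]; exact (alt_of_root_uncovered M v0 Hm Hc Hroot).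
Qed.

Lemma wsum_ext F G s : (forall e, F e <-> G e) -> wsum F s -> wsum G s.
Proof.
  intros HFG [l [Hnd [Hl Hs]]]; exists l; split; [exact Hnd | split; [|exact Hs]].
  intros e; rewrite Hl; apply HFG.
Qed.

Lemma wsum_finite F s : wsum F s -> finite_set F.
Proof. intros [l [_ [Hl _]]]; exists l; intros e; apply Hl. Qed.

Lemma wsum_empty : wsum (fun _ => False) 0.
Proof. exists []; split; [constructor | split; [intros e; cbn; tauto | reflexivity]]. Qed.

Lemma wsum_single x : wsum (fun e => e = x) (w x).
Proof.
  exists [x]; split; [constructor; [cbn; tauto | constructor] |].
  split; [intros e; cbn; intuition | cbn; lia].
Qed.

Lemma wsum_union F G s r :
  (forall e, F e -> G e -> False) -> wsum F s -> wsum G r ->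
  wsum (fun e => F e \/ G e) (s + r).
Proof.
  intros Hdisj [l [Hnd [Hl ->]]] [l' [Hnd' [Hl' ->]]].
  exists (l ++ l'); split; [|split].
  - apply NoDup_app; auto.
    intros e He He'; apply Hl in He; apply Hl' in He'; eauto.
  - intros e; rewrite in_app_iff, Hl, Hl'; tauto.
  - clear; induction l as [|x l IH]; cbn; lia.
Qed.

Lemma wsum_path_parity j n b :
  wsum (fun e => fst e = j /\ snd e < 2 * n /\ Nat.odd (snd e) = b) (if b then n else 0).
Proof.
  induction n as [|n IH].
  - replace (if b then 0 else 0) with 0 by (now destruct b).
    refine (wsum_ext _ _ _ _ wsum_empty); intros e; split; [tauto | lia].
  - set (x := (j, 2 * n + Nat.b2n b)).
    replace (if b then S n else 0) with ((if b then n else 0) + w x)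
      by (unfold x, w; destruct b; cbn [snd Nat.b2n]; decide_parity).
    refine (wsum_ext _ _ _ _ (wsum_union _ _ _ _ _ IH (wsum_single x)));
      intros [a k]; unfold x; destruct b; cbn [fst snd Nat.b2n]; decide_parity.
Qed.

Definition improvable (M : E -> Prop) : Prop :=
  exists N, perf_or_almost N /\ finite_set (setD M N) /\ finite_set (setD N M) /\
    exists a b, wsum (setD N M) a /\ wsum (setD M N) b /\ a < b.

Lemma improvable_intro M N a b :
  perf_or_almost N -> wsum (setD N M) a -> wsum (setD M N) b -> a < b -> improvable M.
Proof.
  intros HN Ha Hb Hab; exists N.
  split; [exact HN | split; [exact (wsum_finite _ _ Hb) | split; [exact (wsum_finite _ _ Ha) | eauto]]].
Qed.

Lemma alt_improvable M i t :
  t <= i + 1 -> (forall e, M e <-> alt i t e) -> improvable M.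
Proof.
  intros Ht HM.
  destruct (Nat.eq_dec t (i + 1)) as [->|Hlt].
  - apply (improvable_intro M (alt (i + 1) (i + 2)) (i + 1 + 0) (0 + (i + 2)));
      [ right; apply alt_almost_perfect; lia
      | refine (wsum_ext _ _ _ _ (wsum_union _ _ _ _ _
          (wsum_path_parity i (i + 1) true) (wsum_path_parity (i + 1) (i + 2) false)))
      | refine (wsum_ext _ _ _ _ (wsum_union _ _ _ _ _
          (wsum_path_parity i (i + 1) false) (wsum_path_parity (i + 1) (i + 2) true)))
      | lia ].
    all: intros [a k]; unfold setD; rewrite ?HM; unfold alt, isE; cbn [fst snd]; decide_parity.
  - apply (improvable_intro M (alt i (t + 1)) (w (i, 2 * t)) (w (i, 2 * t + 1)));
      [ right; apply alt_almost_perfect; lia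
      | refine (wsum_ext _ _ _ _ (wsum_single (i, 2 * t)))
      | refine (wsum_ext _ _ _ _ (wsum_single (i, 2 * t + 1)))
      | unfold w; cbn [snd]; decide_parity ].
    all: intros [a k]; unfold setD; rewrite ?HM; unfold alt, isE; cbn [fst snd]; decide_parity.
Qed.

Theorem mainTheorem7 :
  (exists M, almost_perfect M) /\ ~ (exists M, strongly_w_minimal M).
Proof.
  split.
  - exists (alt 0 0); apply alt_almost_perfect; lia.
  - intros [M [HM Hmin]]; apply Hmin.
    destruct (perf_or_almost_alt M HM) as (i & t & Ht & HMalt).
    exact (alt_improvable M i t Ht HMalt).
Qed.
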